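(* Let $\delta(l)\in\Delta(\mathfrak{t})$, let $\psi=\{k_1(z)\delta(l)\}\psi_0\in\mathcal{M}_{\geqslant0}$ with $k_1\in G_{<0}$ and $\varphi=\{k_2(z)\delta(l)\}\varphi_0\in\mathcal{M}_{<0}$ with $k_2\in G_{\geqslant0}$, and set $U_\alpha:=k_1E_\alpha k_1^{-1}$, $W_\beta:=k_2E_\beta z^{-1}k_2^{-1}$ ($1\le\alpha,\beta\le r$). Suppose that for each $m\ge0$ and $1\le\alpha\le r$ there is $M_{m\alpha}\in\pi_{\geqslant0}(\mathrm{gl}_n(R)[z,z^{-1}))$ (a polynomial in $z$) with $\partial_{m\alpha}(\psi)=M_{m\alpha}\psi$ and $\partial_{m\alpha}(\varphi)=M_{m\alpha}\varphi$, and for each $m<0$ and $1\le\beta\le r$ there is $N_{m\beta}\in\pi_{<0}(\mathrm{gl}_n(R)[z^{-1},z))$ (a polynomial in $z^{-1}$ without constant term) with $\partial_{m\beta}(\psi)=N_{m\beta}\psi$ and $\partial_{m\beta}(\varphi)=N_{m\beta}\varphi$. Then $M_{m\alpha}=\pi_{\geqslant0}(U_\alpha z^m)$, $N_{m\beta}=\pi_{<0}(W_\beta z^{m+1})$, and $(\{U_\alpha\},\{W_\beta\})$ is a solution of the combined $(\mathrm{sl}_n(\mathbb{C}),\mathfrak{t})$-hierarchy (i.e. $(\psi,\varphi)$ is a set of wave matrices of type $\delta(l)$).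
   Context: $R$ is a commutative $\mathbb{C}$-algebra with commuting $\mathbb{C}$-linear derivations $\partial_{m\alpha}$, $m\in\mathbb{Z}$, $1\le\alpha\le r$, acting coefficientwise. $\mathrm{gl}_n(R)[z,z^{-1})$: formal series $\sum_{i=-\infty}^{N}X_iz^i$; $\mathrm{gl}_n(R)[z^{-1},z)$: formal series $\sum_{i=-N}^{\infty}X_iz^i$ ($X_i\in\mathrm{gl}_n(R)$); bracket $[X,Y]=\sum[X_i,Y_j]z^{i+j}$; $\pi_{\geqslant0}$ (resp. $\pi_{<0}$) keeps terms with $i\ge0$ (resp. $i<0$). $\mathfrak{t}\subset\mathrm{sl}_n(\mathbb{C})$ is commutative of maximal dimension $r$, basis $E_1,\dots,E_r$, assumed upper triangular. $G_{<0}=\{\mathrm{Id}+\sum_{i\ge1}Y_iz^{-i}\}$, $G_{\geqslant0}=\{X_0+\sum_{i\ge1}X_iz^i\mid X_0\text{ invertible}\}$ (coefficients in $\mathrm{gl}_n(R)$). For $l\in\mathbb{Z}^n$, $\delta(l)=\mathrm{diag}(z^{l_1},\dots,z^{l_n})$, and $\Delta(\mathfrak{t})=\{\delta(l)\mid [\delta(l),E_\alpha]=0\ \forall\alpha\}$. $\psi_0=\varphi_0$ is a formal symbol (standing for $\exp(\sum_{m\in\mathbb{Z}}\sum_\alpha t_{m\alpha}E_\alpha z^m)$). $\mathcal{M}_{\geqslant0}$ is the set of formal products $\{g\}\psi_0$, $g\in\mathrm{gl}_n(R)[z,z^{-1})$, and $\mathcal{M}_{<0}$ the set of formal products $\{h\}\varphi_0$,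 $h\in\mathrm{gl}_n(R)[z^{-1},z)$ (the factors are kept separate). Left action: $k.\{g\}\psi_0=\{kg\}\psi_0$ for $k\in\mathrm{gl}_n(R)[z,z^{-1})$, and $k.\{h\}\varphi_0=\{kh\}\varphi_0$ for $k\in\mathrm{gl}_n(R)[z^{-1},z)$. Derivations: $\partial_{m\alpha}(\{g\}\psi_0)=\{\partial_{m\alpha}(g)+gE_\alpha z^m\}\psi_0$ and $\partial_{m\alpha}(\{h\}\varphi_0)=\{\partial_{m\alpha}(h)+hE_\alpha z^m\}\varphi_0$. Solution of the combined $(\mathrm{sl}_n(\mathbb{C}),\mathfrak{t})$-hierarchy: for all $m\ge0$ and all $\alpha_1,\alpha_2,\beta$: $\partial_{m\alpha_1}(U_{\alpha_2})=[\pi_{\geqslant0}(U_{\alpha_1}z^m),U_{\alpha_2}]$ and $\partial_{m\alpha_1}(W_\beta)=[\pi_{\geqslant0}(U_{\alpha_1}z^m),W_\beta]$; for all $m<0$ and all $\beta_1,\beta_2,\alpha$: $\partial_{m\beta_1}(W_{\beta_2})=[\pi_{<0}(W_{\beta_1}z^{m+1}),W_{\beta_2}]$ and $\partial_{m\beta_1}(U_\alpha)=[\pi_{<0}(W_{\beta_1}z^{m+1}),U_\alpha]$. *)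

From HB Require Import structures.
From mathcomp Require Import all_boot all_order all_algebra.
Set Implicit Arguments. Unset Strict Implicit. Unset Printing Implicit Defensive.
Import Order.TTheory GRing.Theory Num.Theory.
Local Open Scope ring_scope.

(* Conventions:
   - the base field C is an arbitrary numClosedFieldType F (C is one);
   - R : comAlgType F  is the commutative F-algebra R;
   - gl_n(R)[z,z^{-1})  (finitely many positive powers) = [lser R n]:
       a coefficient function int -> 'M[R]_n together with an upper bound
       on its support;
   - gl_n(R)[z^{-1},z)  (finitely many negative powers) = [user R n]:
       coefficient function together with a lower bound on its support;
   - polynomials in z, z^{-1} (finite Laurent polynomials) = [laur R n],
       which embed in both.
   Equalities of series are coefficientwise (the stored bound is only a
   certificate).  Formal products {g}psi_0 are represented by g itself,
   since the two factors are kept separate. *)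

Section Series.
Variables (F : numClosedFieldType) (R : comAlgType F) (n : nat).
Local Notation mat := 'M[R]_n.

Record lser := LSer {
  lbound : int;
  lcoef : int -> mat;
  lcoef_supp : forall i, lbound < i -> lcoef i = 0 }.

Definition lser_eq (X Y : lser) : Prop := forall i, lcoef X i = lcoef Y i.

Definition lmul_coef (X Y : lser) (k : int) : mat :=
  \sum_(t < absz (lbound X + lbound Y - k + 1))
     lcoef X (lbound X - t%:Z) *m lcoef Y (k - lbound X + t%:Z).

Lemma lmul_supp (X Y : lser) i : lbound X + lbound Y < i -> lmul_coef X Y i = 0.
Proof.
move=> hi; rewrite /lmul_coef big1 // => t _.
rewrite (@lcoef_supp Y) ?mulmx0 //.
have h1 : lbound Y < i - lbound X by rewrite ltrBrDl.
apply: (lt_le_trans h1); rewrite lerDl //.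
Qed.

Definition lmul (X Y : lser) : lser :=
  @LSer (lbound X + lbound Y) (lmul_coef X Y) (@lmul_supp X Y).

Lemma ladd_supp (X Y : lser) i : Num.max (lbound X) (lbound Y) < i ->
  lcoef X i + lcoef Y i = 0.
Proof.
rewrite gt_max => /andP[h1 h2].
by rewrite (lcoef_supp h1) (lcoef_supp h2) addr0.
Qed.

Definition ladd (X Y : lser) : lser :=
  @LSer (Num.max (lbound X) (lbound Y)) (fun i => lcoef X i + lcoef Y i)
        (@ladd_supp X Y).

Lemma lopp_supp (X : lser) i : lbound X < i -> - lcoef X i = 0.
Proof. by move=> h; rewrite (lcoef_supp h) oppr0. Qed.

Definition lopp (X : lser) : lser :=
  @LSer (lbound X) (fun i => - lcoef X i) (@lopp_supp X).

Definition lcomm (X Y : lser) : lser := ladd (lmul X Y) (lopp (lmul Y X)).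

Lemma lmono_supp (A : mat) (m : int) i : m < i ->
  (if i == m then A else 0) = 0.
Proof. by move=> h; rewrite ifN // gt_eqF. Qed.

Definition lmono (A : mat) (m : int) : lser :=
  @LSer m (fun i => if i == m then A else 0) (@lmono_supp A m).

Lemma lder_supp (D : R -> R) (X : lser) i : lbound X < i ->
  (if i <= lbound X then map_mx D (lcoef X i) else 0) = 0.
Proof. by move=> h; rewrite ifN // -ltNge. Qed.

Definition lder (D : R -> R) (X : lser) : lser :=
  @LSer (lbound X) (fun i => if i <= lbound X then map_mx D (lcoef X i) else 0)
        (@lder_supp D X).

Record user := USer {
  ubound : int;
  ucoef : int -> mat;
  ucoef_supp : forall i, i < ubound -> ucoef i = 0 }.

Definition user_eq (X Y : user) : Prop := forall i, ucoef X i = ucoef Y i.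

Definition umul_coef (X Y : user) (k : int) : mat :=
  \sum_(t < absz (k - ubound X - ubound Y + 1))
     ucoef X (ubound X + t%:Z) *m ucoef Y (k - ubound X - t%:Z).

Lemma umul_supp (X Y : user) i : i < ubound X + ubound Y -> umul_coef X Y i = 0.
Proof.
move=> hi; rewrite /umul_coef big1 // => t _.
rewrite (@ucoef_supp Y) ?mulmx0 //.
have h1 : i - ubound X < ubound Y by rewrite ltrBlDl.
apply: (le_lt_trans _ h1); rewrite gerBl //.
Qed.

Definition umul (X Y : user) : user :=
  @USer (ubound X + ubound Y) (umul_coef X Y) (@umul_supp X Y).

Lemma uadd_supp (X Y : user) i : i < Num.min (ubound X) (ubound Y) ->
  ucoef X i + ucoef Y i = 0.
Proof.
rewrite lt_min => /andP[h1 h2].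
by rewrite (ucoef_supp h1) (ucoef_supp h2) addr0.
Qed.

Definition uadd (X Y : user) : user :=
  @USer (Num.min (ubound X) (ubound Y)) (fun i => ucoef X i + ucoef Y i)
        (@uadd_supp X Y).

Lemma uopp_supp (X : user) i : i < ubound X -> - ucoef X i = 0.
Proof. by move=> h; rewrite (ucoef_supp h) oppr0. Qed.

Definition uopp (X : user) : user :=
  @USer (ubound X) (fun i => - ucoef X i) (@uopp_supp X).

Definition ucomm (X Y : user) : user := uadd (umul X Y) (uopp (umul Y X)).

Lemma umono_supp (A : mat) (m : int) i : i < m ->
  (if i == m then A else 0) = 0.
Proof. by move=> h; rewrite ifN // lt_eqF. Qed.

Definition umono (A : mat) (m : int) : user :=
  @USer m (fun i => if i == m then A else 0) (@umono_supp A m).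

Lemma uder_supp (D : R -> R) (X : user) i : i < ubound X ->
  (if ubound X <= i then map_mx D (ucoef X i) else 0) = 0.
Proof. by move=> h; rewrite ifN // -ltNge. Qed.

Definition uder (D : R -> R) (X : user) : user :=
  @USer (ubound X) (fun i => if ubound X <= i then map_mx D (ucoef X i) else 0)
        (@uder_supp D X).

Record laur := Laur {
  llo : int;
  lhi : int;
  pcoef : int -> mat;
  pcoef_supp : forall i, (i < llo) || (lhi < i) -> pcoef i = 0 }.

Definition laur_eq (P Q : laur) : Prop := forall i, pcoef P i = pcoef Q i.

Lemma laur_l_supp (P : laur) i : lhi P < i -> pcoef P i = 0.
Proof. by move=> h; apply: pcoef_supp; rewrite h orbT. Qed.
Definition laur_l (P : laur) : lser := @LSer (lhi P) (pcoef P) (@laur_l_supp P).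

Lemma laur_u_supp (P : laur) i : i < llo P -> pcoef P i = 0.
Proof. by move=> h; apply: pcoef_supp; rewrite h. Qed.
Definition laur_u (P : laur) : user := @USer (llo P) (pcoef P) (@laur_u_supp P).

Lemma piGe0_supp (X : lser) i : (i < 0) || (lbound X < i) ->
  (if 0 <= i then lcoef X i else 0) = 0.
Proof.
case/orP=> h; first by rewrite ifN // -ltNge.
by case: ifP => _ //; rewrite (lcoef_supp h).
Qed.
Definition piGe0 (X : lser) : laur :=
  @Laur 0 (lbound X) (fun i => if 0 <= i then lcoef X i else 0) (@piGe0_supp X).

Lemma piLt0_supp (X : user) i : (i < ubound X) || (-1 < i) ->
  (if i < 0 then ucoef X i else 0) = 0.
Proof.
case/orP=> h; first by case: ifP => _ //; rewrite (ucoef_supp h).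
rewrite ifN // -leNgt; move: h; rewrite -(ltrD2r 1) addNr; by rewrite ltzD1.
Qed.
Definition piLt0 (X : user) : laur :=
  @Laur (ubound X) (-1) (fun i => if i < 0 then ucoef X i else 0) (@piLt0_supp X).

Definition delta_coef (l : 'I_n -> int) (i : int) : mat :=
  \matrix_(a, b) (if (a == b) && (l a == i) then 1 else 0).

Lemma le_sum_abs (l : 'I_n -> int) a : `|l a| <= \sum_b `|l b|.
Proof.
rewrite (bigD1 a) //= lerDl sumr_ge0 // => b _; exact: normr_ge0.
Qed.

Lemma ldelta_supp (l : 'I_n -> int) i : \sum_b `|l b| < i -> delta_coef l i = 0.
Proof.
move=> h; apply/matrixP => a b; rewrite !mxE.
case: ifP => // /andP[_ /eqP e]; move: h; rewrite -e.
by move=> h; have := le_lt_trans (le_trans (ler_norm _) (le_sum_abs l a)) h;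
   rewrite ltxx.
Qed.
Definition ldelta (l : 'I_n -> int) : lser :=
  @LSer (\sum_b `|l b|) (delta_coef l) (@ldelta_supp l).

Lemma udelta_supp (l : 'I_n -> int) i : i < - \sum_b `|l b| -> delta_coef l i = 0.
Proof.
move=> h; apply/matrixP => a b; rewrite !mxE.
case: ifP => // /andP[_ /eqP e]; move: h; rewrite -e.
move=> h; have h2 : - \sum_b `|l b| <= l a.
  by rewrite lerNl (le_trans _ (le_sum_abs l a)) // -normrN ler_norm.
by have := lt_le_trans h h2; rewrite ltxx.
Qed.
Definition udelta (l : 'I_n -> int) : user :=
  @USer (- \sum_b `|l b|) (delta_coef l) (@udelta_supp l).

End Series.

Definition liftmx (F : numClosedFieldType) (R : comAlgType F) (n : nat)
  (A : 'M[F]_n) : 'M[R]_n := map_mx (fun a : F => a%:A) A.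

Definition is_derivation (F : numClosedFieldType) (R : comAlgType F)
  (D : R -> R) : Prop :=
  [/\ forall x y, D (x + y) = D x + D y,
      forall (c : F) x, D (c *: x) = c *: D x &
      forall x y, D (x * y) = D x * y + x * D y].

(* E_1..E_r is a basis of a maximal commutative subalgebra t of sl_n(C)
   consisting of upper triangular matrices *)
Definition is_t_basis (F : numClosedFieldType) (n r : nat)
  (E : 'I_r -> 'M[F]_n) : Prop :=
  [/\ forall a, \tr (E a) = 0,
      forall a b, E a *m E b = E b *m E a,
      forall c : 'I_r -> F, \sum_a c a *: E a = 0 -> forall a, c a = 0,
      forall a (i j : 'I_n), (j < i)%N -> E a i j = 0 &
      forall X : 'M[F]_n, \tr X = 0 -> (forall a, X *m E a = E a *m X) ->
        exists c : 'I_r -> F, X = \sum_a c a *: E a].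

Definition in_Gneg (F : numClosedFieldType) (R : comAlgType F) (n : nat)
  (k : lser R n) : Prop :=
  lcoef k 0 = 1%:M /\ forall i : int, 0 < i -> lcoef k i = 0.

Definition in_Gnonneg (F : numClosedFieldType) (R : comAlgType F) (n : nat)
  (k : user R n) : Prop :=
  (forall i : int, i < 0 -> ucoef k i = 0) /\
  exists B : 'M[R]_n, B *m ucoef k 0 = 1%:M /\ ucoef k 0 *m B = 1%:M.

Definition combined_solution (F : numClosedFieldType) (R : comAlgType F)
  (n r : nat) (D : int -> 'I_r -> R -> R)
  (U : 'I_r -> lser R n) (W : 'I_r -> user R n) : Prop :=
  [/\ forall (m : int) a1 a2, 0 <= m ->
        lser_eq (lder (D m a1) (U a2))
                (lcomm (laur_l (piGe0 (lmul (U a1) (lmono 1%:M m)))) (U a2)),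
      forall (m : int) a1 b, 0 <= m ->
        user_eq (uder (D m a1) (W b))
                (ucomm (laur_u (piGe0 (lmul (U a1) (lmono 1%:M m)))) (W b)),
      forall (m : int) b1 b2, m < 0 ->
        user_eq (uder (D m b1) (W b2))
                (ucomm (laur_u (piLt0 (umul (W b1) (umono 1%:M (m + 1))))) (W b2)) &
      forall (m : int) b a, m < 0 ->
        lser_eq (lder (D m b) (U a))
                (lcomm (laur_l (piLt0 (umul (W b) (umono 1%:M (m + 1))))) (U a))].

(* Write psi = {k1 delta(l)}psi_0.  Since delta(l) is a constant diagonal matrix of
   monomials commuting with E_a, the wave equation d(psi) = M psi can be cancelled by
   delta(l), which leaves the dressing equation M = (d k1) k1^-1 + k1 E_a z^m k1^-1.
   As k1 is in Id + z^-1 gl_n(R)[[z^-1]], so is k1^-1, and (d k1) k1^-1 only has negative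
   powers of z: hence M = pi_{>=0}(U_a z^m).  Differentiating U_b = k1 E_b k1^-1 gives
   d U_b = [(d k1) k1^-1, U_b] = [M - k1 E_a z^m k1^-1, U_b] = [M, U_b], since E_a and
   E_b commute.  The same computations apply to phi after the substitution z |-> z^-1,
   which maps gl_n(R)[z^-1,z) to gl_n(R)[z,z^-1); there (d k2) k2^-1 has no negative
   powers of z, whence N = pi_{<0}(W_b z^(m+1)). *)

From HB Require Import structures.
From mathcomp Require Import all_boot all_order all_algebra zify ring.
From Stdlib Require Import Setoid Morphisms.
Set Implicit Arguments. Unset Strict Implicit. Unset Printing Implicit Defensive.
Import Order.TTheory GRing.Theory Num.Theory.
Local Open Scope ring_scope.

Section IntSums.
Variable V : zmodType.

Definition downseq (hi : int) (N : nat) : seq int := [seq hi - t%:Z | t <- iota 0 N].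

Lemma mem_downseq i hi N : (i \in downseq hi N) = (hi - N%:Z < i <= hi).
Proof.
apply/mapP/idP.
  by case=> t; rewrite mem_iota add0n => /andP[_ ht] ->; lia.
move=> h; exists (absz (hi - i)); first by rewrite mem_iota add0n; lia.
lia.
Qed.

Lemma downseq_uniq hi N : uniq (downseq hi N).
Proof. by rewrite map_inj_uniq ?iota_uniq // => x y; lia. Qed.

Definition int_seg (lo hi : int) : seq int := downseq hi (absz (hi - lo + 1)).

Lemma int_seg_uniq lo hi : uniq (int_seg lo hi).
Proof. exact: downseq_uniq. Qed.

Definition covers (s : seq int) (lo hi : int) : Prop :=
  forall i, lo <= i <= hi -> i \in s.

Lemma mem_int_seg i lo hi : lo <= i <= hi -> i \in int_seg lo hi.
Proof. by rewrite mem_downseq; lia. Qed.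

Lemma covers_int_seg lo hi lo' hi' : lo <= lo' -> hi' <= hi ->
  covers (int_seg lo hi) lo' hi'.
Proof. by move=> l1 l2 i hi1; apply: mem_int_seg; lia. Qed.

Lemma sum_supp_eq (f : int -> V) (s1 s2 : seq int) : uniq s1 -> uniq s2 ->
  (forall i, i \notin s1 -> f i = 0) -> (forall i, i \notin s2 -> f i = 0) ->
  \sum_(i <- s1) f i = \sum_(i <- s2) f i.
Proof.
move=> u1 u2 h1 h2.
have restrict (s t : seq int) : (forall i, i \notin t -> f i = 0) ->
    \sum_(i <- s) f i = \sum_(i <- filter (mem t) s) f i.
  move=> ht; rewrite big_filter [LHS](bigID (mem t)) /=.
  by rewrite [X in _ + X]big1 ?addr0 // => i /ht.
rewrite (restrict s1 s2 h2) (restrict s2 s1 h1); apply/perm_big/uniq_perm.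
- exact: filter_uniq.
- exact: filter_uniq.
by move=> i; rewrite !mem_filter andbC.
Qed.

Lemma sum_covers_eq (f : int -> V) (s1 s2 : seq int) lo hi : uniq s1 -> uniq s2 ->
  covers s1 lo hi -> covers s2 lo hi ->
  (forall i, i < lo -> f i = 0) -> (forall i, hi < i -> f i = 0) ->
  \sum_(i <- s1) f i = \sum_(i <- s2) f i.
Proof.
move=> u1 u2 c1 c2 hlo hhi.
have vanish s : covers s lo hi -> forall i, i \notin s -> f i = 0.
  move=> cs i ni; have [h|h] := ltP i lo; first exact: hlo.
  have [h'|h'] := ltP hi i; first exact: hhi.
  by move: ni; rewrite cs // h h'.
exact: sum_supp_eq (vanish _ c1) (vanish _ c2).
Qed.

Lemma sum_supp1 (f : int -> V) (s : seq int) j : uniq s -> j \in s ->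
  (forall i, i != j -> f i = 0) -> \sum_(i <- s) f i = f j.
Proof.
move=> us js h; rewrite (@sum_supp_eq f s [:: j]) ?big_seq1 //.
- by move=> i ni; apply: h; apply: contraNneq ni => ->.
- by move=> i; rewrite inE => /h.
Qed.

End IntSums.

Ltac covers_tac := apply: covers_int_seg => /=; lia.

Section LaurentSeriesProduct.
Variables (F : numClosedFieldType) (R : comAlgType F) (n : nat).
Local Notation mat := 'M[R]_n.
Local Notation lser := (lser R n).
Implicit Types (X Y Z : lser) (A B : mat).

Lemma lmulE X Y k (s : seq int) : uniq s -> covers s (k - lbound Y) (lbound X) ->
  lcoef (lmul X Y) k = \sum_(i <- s) lcoef X i *m lcoef Y (k - i).
Proof.
move=> us cs; rewrite /= /lmul_coef.
set N := absz _.
have -> : \sum_(t < N) lcoef X (lbound X - t%:Z) *m lcoef Y (k - lbound X + t%:Z) =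
          \sum_(i <- downseq (lbound X) N) lcoef X i *m lcoef Y (k - i).
  rewrite /downseq big_map -[in RHS](subn0 N) -/(index_iota 0 N) big_mkord.
  by apply: eq_bigr => t _; congr (_ *m lcoef Y _); lia.
apply: (@sum_covers_eq _ _ _ _ (k - lbound Y) (lbound X)) => //.
- exact: downseq_uniq.
- by move=> i hi; rewrite mem_downseq; lia.
- by move=> i hi; rewrite (@lcoef_supp _ _ _ Y) ?mulmx0 //; lia.
- by move=> i hi; rewrite (@lcoef_supp _ _ _ X) ?mul0mx.
Qed.

End LaurentSeriesProduct.

Add Parametric Relation (F : numClosedFieldType) (R : comAlgType F) (n : nat) :
  (lser R n) (@lser_eq F R n)
  reflexivity proved by (fun X i => erefl)
  symmetry proved by (fun X Y h i => esym (h i))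
  transitivity proved by (fun X Y Z h1 h2 i => etrans (h1 i) (h2 i)) as lser_eq_rel.

Add Parametric Morphism (F : numClosedFieldType) (R : comAlgType F) (n : nat) :
  (@lmul F R n) with signature
  (@lser_eq F R n) ==> (@lser_eq F R n) ==> (@lser_eq F R n) as lmul_mor.
Proof.
move=> X X' hX Y Y' hY k.
set s := int_seg (k - `|lbound Y| - `|lbound Y'|) (`|lbound X| + `|lbound X'|).
rewrite (@lmulE _ _ _ _ _ _ s) ?int_seg_uniq //; last by covers_tac.
rewrite (@lmulE _ _ _ _ _ _ s) ?int_seg_uniq //; last by covers_tac.
by apply: eq_bigr => i _; rewrite hX hY.
Qed.

Add Parametric Morphism (F : numClosedFieldType) (R : comAlgType F) (n : nat) :
  (@ladd F R n) with signature
  (@lser_eq F R n) ==> (@lser_eq F R n) ==> (@lser_eq F R n) as ladd_mor.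
Proof. by move=> X X' h Y Y' h' i /=; rewrite h h'. Qed.

Add Parametric Morphism (F : numClosedFieldType) (R : comAlgType F) (n : nat) :
  (@lopp F R n) with signature (@lser_eq F R n) ==> (@lser_eq F R n) as lopp_mor.
Proof. by move=> X X' h i /=; rewrite h. Qed.

Add Parametric Morphism (F : numClosedFieldType) (R : comAlgType F) (n : nat) :
  (@lcomm F R n) with signature
  (@lser_eq F R n) ==> (@lser_eq F R n) ==> (@lser_eq F R n) as lcomm_mor.
Proof. by move=> X X' h Y Y' h'; rewrite /lcomm h h'. Qed.

Section LaurentSeriesAlgebra.
Variables (F : numClosedFieldType) (R : comAlgType F) (n : nat).
Local Notation mat := 'M[R]_n.
Local Notation lser := (lser R n).
Implicit Types (X Y Z : lser) (A B : mat).

Lemma laddE X Y i : lcoef (ladd X Y) i = lcoef X i + lcoef Y i. Proof. by []. Qed.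
Lemma loppE X i : lcoef (lopp X) i = - lcoef X i. Proof. by []. Qed.
Lemma lmonoE A m i : lcoef (lmono A m) i = if i == m then A else 0. Proof. by []. Qed.

Lemma lmul_monoE X A m k : lcoef (lmul X (lmono A m)) k = lcoef X (k - m) *m A.
Proof.
set s := int_seg (k - m) (`|lbound X| + `|k - m|).
rewrite (@lmulE _ _ _ _ _ _ s) ?int_seg_uniq //; last by covers_tac.
rewrite (@sum_supp1 _ _ _ (k - m)) ?int_seg_uniq //=.
- by rewrite ifT //; apply/eqP; lia.
- by apply: mem_int_seg; lia.
- by move=> i hi; rewrite ifN ?mulmx0 //; apply/eqP; move/eqP: hi; lia.
Qed.

Lemma lmono_mulE X A m k : lcoef (lmul (lmono A m) X) k = A *m lcoef X (k - m).
Proof.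
set s := int_seg (- `|k| - `|lbound X| - `|m|) `|m|.
rewrite (@lmulE _ _ _ _ _ _ s) ?int_seg_uniq //; last by covers_tac.
rewrite (@sum_supp1 _ _ _ m) ?int_seg_uniq //=.
- by rewrite eqxx.
- by apply: mem_int_seg; lia.
- by move=> i hi; rewrite ifN ?mul0mx.
Qed.

Lemma lmulA X Y Z : lser_eq (lmul (lmul X Y) Z) (lmul X (lmul Y Z)).
Proof.
move=> k.
set s := int_seg (k - `|lbound Y| - `|lbound Z|) (`|lbound X| + `|lbound Y|).
have us : uniq s by exact: int_seg_uniq.
rewrite (@lmulE _ _ _ _ _ _ s) //; last by covers_tac.
rewrite (@lmulE _ _ _ X _ _ s) //; last by rewrite /=; covers_tac.
transitivity (\sum_(i <- s) \sum_(j <- s)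
   lcoef X j *m lcoef Y (i - j) *m lcoef Z (k - i)).
  apply: eq_bigr => i _.
  have [h|h] := ltP (lbound Z) (k - i).
    by rewrite (@lcoef_supp _ _ _ Z) // mulmx0 big1 // => j _; rewrite mulmx0.
  by rewrite (@lmulE _ _ _ _ _ _ s) // ?mulmx_suml //; covers_tac.
rewrite exchange_big; apply: eq_bigr => j _.
have [h|h] := ltP (lbound X) j.
  by rewrite (@lcoef_supp _ _ _ X) // mul0mx big1 // => i _; rewrite !mul0mx.
have us' : uniq (map (fun i => i - j) s) by rewrite map_inj_uniq // => x y; lia.
have cs' : covers (map (fun i => i - j) s) (k - j - lbound Z) (lbound Y).
  move=> i hi; have -> : i = (i + j) - j by lia.
  by apply: map_f; apply: mem_int_seg; lia.
rewrite (@lmulE _ _ _ Y Z _ _ us' cs') mulmx_sumr [RHS]big_map.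
by apply: eq_bigr => i _; rewrite mulmxA; congr (_ *m lcoef Z _); lia.
Qed.

Lemma lmulDl X Y Z : lser_eq (lmul (ladd X Y) Z) (ladd (lmul X Z) (lmul Y Z)).
Proof.
move=> k; rewrite laddE.
set s := int_seg (k - `|lbound Z|) (`|lbound X| + `|lbound Y|).
rewrite !(@lmulE _ _ _ _ Z k s) ?int_seg_uniq //; try by covers_tac.
by rewrite -big_split; apply: eq_bigr => i _; rewrite mulmxDl.
Qed.

Lemma lmulDr X Y Z : lser_eq (lmul X (ladd Y Z)) (ladd (lmul X Y) (lmul X Z)).
Proof.
move=> k; rewrite laddE.
set s := int_seg (k - `|lbound Z| - `|lbound Y|) `|lbound X|.
rewrite !(@lmulE _ _ _ X _ k s) ?int_seg_uniq //; try by covers_tac.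
by rewrite -big_split; apply: eq_bigr => i _; rewrite mulmxDr.
Qed.

Lemma lmulNl X Y : lser_eq (lmul (lopp X) Y) (lopp (lmul X Y)).
Proof.
move=> k; rewrite loppE.
set s := int_seg (k - `|lbound Y|) `|lbound X|.
rewrite !(@lmulE _ _ _ _ Y k s) ?int_seg_uniq //; try by covers_tac.
by rewrite -sumrN; apply: eq_bigr => i _; rewrite mulNmx.
Qed.

Lemma lmulNr X Y : lser_eq (lmul X (lopp Y)) (lopp (lmul X Y)).
Proof.
move=> k; rewrite loppE.
set s := int_seg (k - `|lbound Y|) `|lbound X|.
rewrite !(@lmulE _ _ _ X _ k s) ?int_seg_uniq //; try by covers_tac.
by rewrite -sumrN; apply: eq_bigr => i _; rewrite mulmxN.
Qed.

Lemma lmul1l X : lser_eq (lmul (lmono 1%:M 0) X) X.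
Proof. by move=> k; rewrite lmono_mulE mul1mx subr0. Qed.

Lemma lmul1r X : lser_eq (lmul X (lmono 1%:M 0)) X.
Proof. by move=> k; rewrite lmul_monoE mulmx1 subr0. Qed.

Lemma lmul0r X Y : (forall i, lcoef Y i = 0) -> forall k, lcoef (lmul X Y) k = 0.
Proof.
move=> h k; rewrite (@lmulE _ _ _ _ _ _ (int_seg (k - lbound Y) (lbound X))).
- by rewrite big1 // => i _; rewrite h mulmx0.
- exact: int_seg_uniq.
- by covers_tac.
Qed.

Lemma lmul0l X Y : (forall i, lcoef X i = 0) -> forall k, lcoef (lmul X Y) k = 0.
Proof.
move=> h k; rewrite (@lmulE _ _ _ _ _ _ (int_seg (k - lbound Y) (lbound X))).
- by rewrite big1 // => i _; rewrite h mul0mx.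
- exact: int_seg_uniq.
- by covers_tac.
Qed.

Lemma lmul_coef_gt X Y (a b : int) j : (forall t, a < t -> lcoef X t = 0) ->
  (forall t, b < t -> lcoef Y t = 0) -> a + b < j -> lcoef (lmul X Y) j = 0.
Proof.
move=> hX hY hj; rewrite (@lmulE _ _ _ _ _ _ (int_seg (j - lbound Y) (lbound X))).
- rewrite big1 // => t _; have [h|h] := ltP a t; first by rewrite hX ?mul0mx.
  by rewrite hY ?mulmx0 //; lia.
- exact: int_seg_uniq.
- by covers_tac.
Qed.

Lemma lmono_mul A B p q :
  lser_eq (lmul (lmono A p) (lmono B q)) (lmono (A *m B) (p + q)).
Proof.
move=> k; rewrite lmono_mulE !lmonoE.
by case: eqP => h; case: eqP => h' //; try lia; rewrite mulmx0.
Qed.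

Lemma lmono1_commute X m : lser_eq (lmul (lmono 1%:M m) X) (lmul X (lmono 1%:M m)).
Proof. by move=> k; rewrite lmul_monoE lmono_mulE mul1mx mulmx1. Qed.

Lemma lmono_commute X A : lser_eq (lmul X (lmono A 0)) (lmul (lmono A 0) X) ->
  forall k, lcoef X k *m A = A *m lcoef X k.
Proof. by move=> h k; have := h k; rewrite lmul_monoE lmono_mulE subr0. Qed.

Lemma conj_mono_shift K Ki A p q r : r = p + q ->
  lser_eq (lmul (lmul K (lmono A r)) Ki)
          (lmul (lmul (lmul K (lmono A p)) Ki) (lmono 1%:M q)).
Proof.
move=> ->; have -> : lser_eq (lmono A (p + q)) (lmul (lmono A p) (lmono 1%:M q)).
  by rewrite lmono_mul mulmx1.
by rewrite !lmulA lmono1_commute.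
Qed.

Lemma rinv_coef_gt0 (K Ki : lser) (B0 : 'M[R]_n) :
  lser_eq (lmul K Ki) (lmono 1%:M 0) -> (forall t, 0 < t -> lcoef K t = 0) ->
  B0 *m lcoef K 0 = 1%:M -> forall j, 0 < j -> lcoef Ki j = 0.
Proof.
move=> hKKi hK hB0.
suff bounded d : forall j, 0 < j -> lbound Ki < j + d%:Z -> lcoef Ki j = 0.
  by move=> j hj; apply: (bounded (absz (lbound Ki))) => //; lia.
elim: d => [|d IH] j hj hb; first by apply: lcoef_supp; lia.
have leading : lcoef (lmul K Ki) j = lcoef K 0 *m lcoef Ki j.
  set s := int_seg (- `|j| - `|lbound Ki|) `|lbound K|.
  rewrite (@lmulE _ _ _ _ _ _ s) ?int_seg_uniq //; last by covers_tac.
  rewrite (@sum_supp1 _ _ _ 0) ?subr0 ?int_seg_uniq //; first by apply: mem_int_seg; lia.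
  move=> t ht; have [h|h] := ltP 0 t; first by rewrite hK ?mul0mx.
  by rewrite IH ?mulmx0 //; move/eqP: ht; lia.
have : lcoef (lmul K Ki) j = 0 by rewrite hKKi lmonoE ifN //; apply/eqP; lia.
by rewrite leading => h0; rewrite -[lcoef Ki j]mul1mx -hB0 -mulmxA h0 mulmx0.
Qed.

End LaurentSeriesAlgebra.

Section Derivation.
Variables (F : numClosedFieldType) (R : comAlgType F) (n : nat) (D : R -> R).
Hypothesis hD : is_derivation D.
Local Notation mat := 'M[R]_n.
Local Notation lser := (lser R n).

Lemma derivD x y : D (x + y) = D x + D y. Proof. by case: hD. Qed.
Lemma derivZ (c : F) x : D (c *: x) = c *: D x. Proof. by case: hD. Qed.
Lemma derivM x y : D (x * y) = D x * y + x * D y. Proof. by case: hD. Qed.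

Lemma deriv0 : D 0 = 0.
Proof. by apply: (addrI (D 0)); rewrite -derivD !addr0. Qed.

Lemma deriv1 : D 1 = 0.
Proof.
have h := derivM 1 1; rewrite !mul1r mulr1 in h.
by apply: (addrI (D 1)); rewrite addr0 -h.
Qed.

Lemma deriv_alg (c : F) : D c%:A = 0.
Proof. by rewrite derivZ deriv1 scaler0. Qed.

Lemma deriv_liftmx (A : 'M[F]_n) i j : D (liftmx R A i j) = 0.
Proof. by rewrite mxE deriv_alg. Qed.

Lemma deriv_delta_coef (l : 'I_n -> int) k i j : D (delta_coef R l k i j) = 0.
Proof. by rewrite mxE; case: ifP; rewrite ?deriv1 ?deriv0. Qed.

Lemma deriv_scalar1_mx i j : D ((1%:M : mat) i j) = 0.
Proof. by rewrite mxE; case: (i == j); rewrite ?deriv1 ?deriv0. Qed.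

Lemma map_deriv0 : map_mx D (0 : mat) = 0.
Proof. by apply/matrixP => i j; rewrite !mxE deriv0. Qed.

Lemma map_derivD (A B : mat) : map_mx D (A + B) = map_mx D A + map_mx D B.
Proof. by apply/matrixP => i j; rewrite !mxE derivD. Qed.

Lemma map_derivM (A B : mat) :
  map_mx D (A *m B) = map_mx D A *m B + A *m map_mx D B.
Proof.
apply/matrixP => i j; rewrite !mxE (big_morph _ derivD deriv0) -big_split /=.
by apply: eq_bigr => c _; rewrite derivM !mxE.
Qed.

Lemma lderE (X : lser) i : lcoef (lder D X) i = map_mx D (lcoef X i).
Proof.
rewrite /=; case: ifP => // /negbT; rewrite -ltNge => h.
by rewrite lcoef_supp // map_deriv0.
Qed.

Lemma lder_const (X : lser) : (forall i a b, D (lcoef X i a b) = 0) ->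
  forall i, lcoef (lder D X) i = 0.
Proof. by move=> h i; rewrite lderE; apply/matrixP => a b; rewrite !mxE h. Qed.

Lemma lder_mono_const (B : mat) q : (forall i j, D (B i j) = 0) ->
  forall t, lcoef (lder D (lmono B q)) t = 0.
Proof.
move=> hB; apply: lder_const => t i j.
by rewrite lmonoE; case: ifP => _; rewrite ?mxE ?deriv0 ?hB.
Qed.

Lemma lder_mul (X Y : lser) :
  lser_eq (lder D (lmul X Y)) (ladd (lmul (lder D X) Y) (lmul X (lder D Y))).
Proof.
move=> k; rewrite laddE lderE.
set s := int_seg (k - `|lbound Y|) `|lbound X|.
have [us cs] : uniq s /\ covers s (k - lbound Y) (lbound X).
  by split; [exact: int_seg_uniq | covers_tac].
rewrite !(@lmulE _ _ _ _ _ _ s) //.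
rewrite (big_morph _ map_derivD map_deriv0) -big_split.
by apply: eq_bigr => i _; rewrite map_derivM !lderE.
Qed.

End Derivation.

Add Parametric Morphism (F : numClosedFieldType) (R : comAlgType F) (n : nat)
  (D : R -> R) (hD : is_derivation D) : (@lder F R n D) with signature
  (@lser_eq F R n) ==> (@lser_eq F R n) as lder_mor.
Proof. by move=> X Y h i; rewrite !(lderE hD) h. Qed.

Section Delta.
Variables (F : numClosedFieldType) (R : comAlgType F) (n : nat) (l : 'I_n -> int).
Local Notation mat := 'M[R]_n.
Local Notation lser := (lser R n).
Variable Dl : lser.
Hypothesis hDl : forall i, lcoef Dl i = delta_coef R l i.

Lemma lmul_deltaE (X : lser) k a b : lcoef (lmul X Dl) k a b = lcoef X (k - l b) a b.
Proof.
set s := int_seg (k - `|lbound Dl| - `|l b|) (`|lbound X| + `|k - l b|).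
rewrite (@lmulE _ _ _ _ _ _ s) ?int_seg_uniq //; last by covers_tac.
rewrite summxE (@sum_supp1 _ _ _ (k - l b)) ?int_seg_uniq //.
- rewrite !mxE (bigD1 b) //= big1 ?addr0.
    by rewrite hDl mxE eqxx /= ifT ?mulr1 //; apply/eqP; lia.
  by move=> c hc; rewrite hDl mxE (negbTE hc) mulr0.
- by apply: mem_int_seg; lia.
- move=> i hi; rewrite !mxE big1 // => c _; rewrite hDl mxE.
  case: ifP => [/andP[/eqP -> /eqP h]|]; last by rewrite mulr0.
  by move/eqP: hi; lia.
Qed.

Lemma lmul_delta_inj (X Y : lser) : lser_eq (lmul X Dl) (lmul Y Dl) -> lser_eq X Y.
Proof.
move=> h j; apply/matrixP => a b.
have := congr1 (fun M : mat => M a b) (h (j + l b)).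
by rewrite /= !lmul_deltaE addrK.
Qed.

Lemma delta_mono_commute (A : mat) m :
  (forall k, delta_coef R l k *m A = A *m delta_coef R l k) ->
  lser_eq (lmul Dl (lmono A m)) (lmul (lmono A m) Dl).
Proof. by move=> h k; rewrite lmul_monoE lmono_mulE !hDl h. Qed.

End Delta.

(* [lwave_eq D g A m P] encodes [D({g}psi_0) = P {g}psi_0] when [D psi_0 = A z^m psi_0];
   [uwave_eq] is the same for [{g}phi_0]. *)
Definition lwave_eq (F : numClosedFieldType) (R : comAlgType F) (n : nat) (D : R -> R)
  (g : lser R n) (A : 'M[R]_n) (m : int) (P : lser R n) : Prop :=
  lser_eq (ladd (lder D g) (lmul g (lmono A m))) (lmul P g).

Definition uwave_eq (F : numClosedFieldType) (R : comAlgType F) (n : nat) (D : R -> R)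
  (g : user R n) (A : 'M[R]_n) (m : int) (P : user R n) : Prop :=
  user_eq (uadd (uder D g) (umul g (umono A m))) (umul P g).

Section Dressing.
Variables (F : numClosedFieldType) (R : comAlgType F) (n : nat).
Local Notation mat := 'M[R]_n.
Local Notation lser := (lser R n).
Variables (D : R -> R) (K Ki : lser).
Hypothesis hD : is_derivation D.
Hypotheses (hKKi : lser_eq (lmul K Ki) (lmono 1%:M 0))
           (hKiK : lser_eq (lmul Ki K) (lmono 1%:M 0)).

Lemma lmul_invK Y : lser_eq (lmul Ki (lmul K Y)) Y.
Proof. by rewrite -lmulA hKiK lmul1l. Qed.

Lemma lder_inv : lser_eq (lder D Ki) (lopp (lmul Ki (lmul (lder D K) Ki))).
Proof.
have sum0 i : lcoef (lmul (lder D K) Ki) i + lcoef (lmul K (lder D Ki)) i = 0.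
  rewrite -laddE -(lder_mul hD K Ki i) (lder_mor hD hKKi).
  exact/(lder_mono_const hD)/(deriv_scalar1_mx hD).
have dKi : lser_eq (lmul K (lder D Ki)) (lopp (lmul (lder D K) Ki)).
  by move=> i; rewrite loppE; apply/eqP; rewrite -addr_eq0 addrC sum0.
by rewrite -{1}(lmul_invK (lder D Ki)) dKi lmulNr.
Qed.

Lemma lder_conj (B : mat) q : (forall i j, D (B i j) = 0) ->
  lser_eq (lder D (lmul (lmul K (lmono B q)) Ki))
          (lcomm (lmul (lder D K) Ki) (lmul (lmul K (lmono B q)) Ki)).
Proof.
move=> hB; rewrite /lcomm (lder_mul hD) (lder_mul hD) lder_inv lmulDl lmulNr !lmulA lmul_invK.
move=> i; rewrite !laddE !loppE (lmul0r _ (lmul0l _ (lder_mono_const hD _ hB))).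
by rewrite addr0.
Qed.

Variables (l : 'I_n -> int) (Dl : lser) (A : mat) (p : int) (P : lser).
Hypothesis hDl : forall i, lcoef Dl i = delta_coef R l i.
Hypothesis hdA : forall k, delta_coef R l k *m A = A *m delta_coef R l k.
Hypothesis hwave : lwave_eq D (lmul K Dl) A p P.

(* Cancelling [Dl] is possible because [delta(l)] commutes with [A] and is constant. *)
Lemma dressing_eq : lser_eq (ladd (lmul (lder D K) Ki) (lmul (lmul K (lmono A p)) Ki)) P.
Proof.
have wave := hwave; rewrite /lwave_eq in wave.
have dDl : lser_eq (lmul (ladd (lder D K) (lmul K (lmono A p))) Dl) (lmul (lmul P K) Dl).
  rewrite lmulA -wave lmulDl (lder_mul hD K Dl) !lmulA (delta_mono_commute hDl p hdA).
  move=> i; rewrite !laddE (lmul0r _ (lder_const hD _)) ?addr0 // => t a b.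
  by rewrite hDl (deriv_delta_coef hD).
by rewrite -lmulDl (lmul_delta_inj hDl dDl) lmulA hKKi lmul1r.
Qed.

Lemma dressing_coef_gt (a : int) : (forall t, a < t -> lcoef (lder D K) t = 0) ->
  (forall t, 0 < t -> lcoef Ki t = 0) ->
  forall i, a < i -> lcoef P i = lcoef (lmul (lmul K (lmono A p)) Ki) i.
Proof.
move=> hdK hKi i hi.
by rewrite -(dressing_eq i) laddE (lmul_coef_gt hdK hKi) ?add0r ?addr0.
Qed.

Lemma dressing_lax (B : mat) q : A *m B = B *m A -> (forall i j, D (B i j) = 0) ->
  lser_eq (lder D (lmul (lmul K (lmono B q)) Ki))
          (lcomm P (lmul (lmul K (lmono B q)) Ki)).
Proof.
move=> hAB hB.
have dKKi : lser_eq (lmul (lder D K) Ki) (ladd P (lopp (lmul (lmul K (lmono A p)) Ki))).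
  by move=> i; rewrite laddE loppE -(dressing_eq i) laddE addrK.
have AB_commute Y : lser_eq (lmul (lmono A p) (lmul (lmono B q) Y))
                            (lmul (lmono B q) (lmul (lmono A p) Y)).
  by rewrite -!lmulA !lmono_mul hAB addrC.
rewrite (@lder_conj B q hB) /lcomm dKKi lmulDl lmulDr lmulNl lmulNr !lmulA !lmul_invK AB_commute.
by move=> i; rewrite !laddE !loppE opprB addrA subrK.
Qed.

End Dressing.

Section Flip.
Variables (F : numClosedFieldType) (R : comAlgType F) (n : nat).
Local Notation mat := 'M[R]_n.
Local Notation lser := (lser R n).
Local Notation user := (user R n).
Implicit Types (X Y : user) (A : mat).

Lemma flip_supp X i : - ubound X < i -> ucoef X (- i) = 0.
Proof. by move=> h; apply: ucoef_supp; lia. Qed.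

Definition flip X : lser := @LSer F R n (- ubound X) (fun i => ucoef X (- i)) (@flip_supp X).

Lemma flipE X i : lcoef (flip X) i = ucoef X (- i). Proof. by []. Qed.

Lemma user_eq_flip X Y : user_eq X Y <-> lser_eq (flip X) (flip Y).
Proof.
split=> h i; first by rewrite !flipE h.
by have := h (- i); rewrite !flipE opprK.
Qed.

Lemma flip_umul X Y : lser_eq (flip (umul X Y)) (lmul (flip X) (flip Y)).
Proof.
move=> k; rewrite flipE /= /umul_coef /lmul_coef /=.
have -> : - k - ubound X - ubound Y + 1 = - ubound X + - ubound Y - k + 1 by lia.
by apply: eq_bigr => t _; congr (_ *m _); congr (ucoef _ _); ring.
Qed.

Lemma flip_uadd X Y : lser_eq (flip (uadd X Y)) (ladd (flip X) (flip Y)).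
Proof. by []. Qed.

Lemma flip_uopp X : lser_eq (flip (uopp X)) (lopp (flip X)).
Proof. by []. Qed.

Lemma flip_ucomm X Y : lser_eq (flip (ucomm X Y)) (lcomm (flip X) (flip Y)).
Proof. by rewrite /ucomm /lcomm flip_uadd flip_uopp !flip_umul. Qed.

Lemma flip_umono A m : lser_eq (flip (umono A m)) (lmono A (- m)).
Proof. by move=> k; rewrite flipE /= -eqr_oppLR. Qed.

Lemma flip_uder D X : is_derivation D -> lser_eq (flip (uder D X)) (lder D (flip X)).
Proof.
move=> hD k; rewrite (lderE hD) !flipE /=; case: ifP => // /negbT; rewrite -ltNge.
by move=> h; rewrite ucoef_supp // (@map_deriv0 _ _ n _ hD).
Qed.

Lemma flip_inverse X Y : user_eq (umul X Y) (umono 1%:M 0) ->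
  lser_eq (lmul (flip X) (flip Y)) (lmono 1%:M 0).
Proof. by move/user_eq_flip; rewrite flip_umul flip_umono oppr0. Qed.

Lemma flip_uwave_eq D (g X : user) A m (P : user) : is_derivation D ->
  uwave_eq D (umul g X) A m P -> lwave_eq D (lmul (flip g) (flip X)) A (- m) (flip P).
Proof.
move=> hD /user_eq_flip; rewrite /lwave_eq -(lder_mor hD (flip_umul g X)) -flip_umono.
by rewrite -!flip_umul -(flip_uder _ hD) -flip_uadd.
Qed.

Lemma delta_coef_opp (l : 'I_n -> int) k :
  delta_coef R (fun a => - l a) k = delta_coef R l (- k).
Proof.
apply/matrixP => a b; rewrite !mxE.
by congr (if _ then _ else _); congr (_ && _); apply/eqP/eqP; lia.
Qed.

Lemma flip_udelta (l : 'I_n -> int) k :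
  lcoef (flip (udelta R l)) k = delta_coef R (fun a => - l a) k.
Proof. by rewrite delta_coef_opp. Qed.

Lemma delta_opp_commute (l : 'I_n -> int) A :
  (forall k, delta_coef R l k *m A = A *m delta_coef R l k) ->
  forall k, delta_coef R (fun a => - l a) k *m A = A *m delta_coef R (fun a => - l a) k.
Proof. by move=> h k; rewrite delta_coef_opp. Qed.

End Flip.

Add Parametric Relation (F : numClosedFieldType) (R : comAlgType F) (n : nat) :
  (user R n) (@user_eq F R n)
  reflexivity proved by (fun X i => erefl)
  symmetry proved by (fun X Y h i => esym (h i))
  transitivity proved by (fun X Y Z h1 h2 i => etrans (h1 i) (h2 i)) as user_eq_rel.

Add Parametric Morphism (F : numClosedFieldType) (R : comAlgType F) (n : nat) :
  (@ucomm F R n) with signature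
  (@user_eq F R n) ==> (@user_eq F R n) ==> (@user_eq F R n) as ucomm_mor.
Proof.
move=> X X' /user_eq_flip hX Y Y' /user_eq_flip hY; apply/user_eq_flip.
by rewrite !flip_ucomm hX hY.
Qed.

Add Parametric Relation (F : numClosedFieldType) (R : comAlgType F) (n : nat) :
  (laur R n) (@laur_eq F R n)
  reflexivity proved by (fun X i => erefl)
  symmetry proved by (fun X Y h i => esym (h i))
  transitivity proved by (fun X Y Z h1 h2 i => etrans (h1 i) (h2 i)) as laur_eq_rel.

Add Parametric Morphism (F : numClosedFieldType) (R : comAlgType F) (n : nat) :
  (@laur_l F R n) with signature (@laur_eq F R n) ==> (@lser_eq F R n) as laur_l_mor.
Proof. by []. Qed.

Add Parametric Morphism (F : numClosedFieldType) (R : comAlgType F) (n : nat) :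
  (@laur_u F R n) with signature (@laur_eq F R n) ==> (@user_eq F R n) as laur_u_mor.
Proof. by []. Qed.

Section WaveMatrices.
Variables (F : numClosedFieldType) (R : comAlgType F) (n : nat).
Local Notation mat := 'M[R]_n.
Variables (D : R -> R) (l : 'I_n -> int) (A : mat) (m : int) (P : laur R n).

Lemma ldeltaE i : lcoef (ldelta R l) i = delta_coef R l i. Proof. by []. Qed.

Hypothesis hD : is_derivation D.
Hypothesis hdA : forall i, delta_coef R l i *m A = A *m delta_coef R l i.

(* [D k] has no coefficient in degree [>= 0] since the leading coefficient of [k] is [1]. *)
Lemma Gneg_wave_piGe0 (k kinv : lser R n) : in_Gneg k ->
  lser_eq (lmul k kinv) (lmono 1%:M 0) ->
  (forall i, i < 0 -> pcoef P i = 0) ->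
  lwave_eq D (lmul k (ldelta R l)) A m (laur_l P) ->
  laur_eq P (piGe0 (lmul (lmul (lmul k (lmono A 0)) kinv) (lmono 1%:M m))).
Proof.
move=> [k0 kpos] hkr hP hwave i /=.
have [hi|hi] := ltP i 0; first by rewrite hP // ifN // -ltNge.
have kinv_pos : forall t, 0 < t -> lcoef kinv t = 0.
  by apply: (rinv_coef_gt0 (B0 := 1%:M) hkr kpos); rewrite k0 mul1mx.
have dk_ge0 : forall t, -1 < t -> lcoef (lder D k) t = 0.
  move=> t ht; rewrite (lderE hD).
  have [h|h] := ltP 0 t; first by rewrite kpos // (map_deriv0 _ hD).
  have -> : t = 0 by lia.
  by rewrite k0; apply/matrixP => a b; rewrite [LHS]mxE [RHS]mxE (deriv_scalar1_mx hD).
change (pcoef P i = lcoef (lmul (lmul (lmul k (lmono A 0)) kinv) (lmono 1%:M m)) i).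
rewrite -(conj_mono_shift _ _ _ (p := 0) (r := m) _ i); last by rewrite add0r.
by apply: (dressing_coef_gt hD hkr ldeltaE hdA hwave dk_ge0 kinv_pos); lia.
Qed.

Lemma Gnonneg_wave_piLt0 (k kinv : user R n) : in_Gnonneg k ->
  user_eq (umul k kinv) (umono 1%:M 0) ->
  (forall i, 0 <= i -> pcoef P i = 0) ->
  uwave_eq D (umul k (udelta R l)) A m (laur_u P) ->
  laur_eq P (piLt0 (umul (umul (umul k (umono A (-1))) kinv) (umono 1%:M (m + 1)))).
Proof.
move=> [kneg [B0 [hB0 _]]] hkr hP hwave i /=.
have [hi|hi] := ltP i 0; last by rewrite hP // ifN // -leNgt.
have fkinv_pos : forall t, 0 < t -> lcoef (flip kinv) t = 0.
  apply: (rinv_coef_gt0 (B0 := B0) (flip_inverse hkr)); last by rewrite flipE oppr0.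
  by move=> t ht; rewrite flipE kneg //; lia.
have dfk_pos : forall t, 0 < t -> lcoef (lder D (flip k)) t = 0.
  by move=> t ht; rewrite (lderE hD) flipE kneg ?(map_deriv0 _ hD) //; lia.
have e : lser_eq (flip (umul (umul (umul k (umono A (-1))) kinv) (umono 1%:M (m + 1))))
  (lmul (lmul (lmul (flip k) (lmono A 1)) (flip kinv)) (lmono 1%:M (- (m + 1)))).
  by rewrite !flip_umul !flip_umono opprK.
change (ucoef (laur_u P) i = ucoef (umul (umul (umul k (umono A (-1))) kinv) (umono 1%:M (m + 1))) i).
rewrite -[i]opprK -!flipE (e (- i)) -(conj_mono_shift _ _ _ (p := 1) (r := - m) _ (- i)).
  by apply: (dressing_coef_gt hD (flip_inverse hkr) (@flip_udelta _ _ _ l) (delta_opp_commute hdA)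
    (flip_uwave_eq hD hwave) dfk_pos fkinv_pos); lia.
by lia.
Qed.

Lemma user_wave_lax (k kinv : user R n) (B : mat) q (Pu : user R n) :
  user_eq (umul k kinv) (umono 1%:M 0) -> user_eq (umul kinv k) (umono 1%:M 0) ->
  A *m B = B *m A -> (forall i j, D (B i j) = 0) ->
  uwave_eq D (umul k (udelta R l)) A m Pu ->
  user_eq (uder D (umul (umul k (umono B q)) kinv))
          (ucomm Pu (umul (umul k (umono B q)) kinv)).
Proof.
move=> hkr hkl hAB hB hwave; apply/user_eq_flip.
have e : lser_eq (flip (umul (umul k (umono B q)) kinv))
                 (lmul (lmul (flip k) (lmono B (- q))) (flip kinv)).
  by rewrite !flip_umul flip_umono.
rewrite (flip_uder _ hD) (lder_mor hD e) flip_ucomm e.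
exact: (dressing_lax hD (flip_inverse hkr) (flip_inverse hkl) (@flip_udelta _ _ _ l)
  (delta_opp_commute hdA) (flip_uwave_eq hD hwave) _ hAB hB).
Qed.

End WaveMatrices.

Lemma liftmxM (F : numClosedFieldType) (R : comAlgType F) (n : nat) (A B : 'M[F]_n) :
  liftmx R (A *m B) = liftmx R A *m liftmx R B.
Proof. exact: (map_mxM (in_alg R)). Qed.

Theorem proposition4p1 (F : numClosedFieldType) (R : comAlgType F) (n r : nat)
  (D : int -> 'I_r -> R -> R) (E : 'I_r -> 'M[F]_n) (l : 'I_n -> int)
  (k1 k1inv : lser R n) (k2 k2inv : user R n)
  (M N : int -> 'I_r -> laur R n) :
  (forall m a, is_derivation (D m a)) ->
  (forall m a m' b x, D m a (D m' b x) = D m' b (D m a x)) ->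
  is_t_basis E ->
  (forall a, lser_eq (lmul (ldelta R l) (lmono (liftmx R (E a)) 0))
                     (lmul (lmono (liftmx R (E a)) 0) (ldelta R l))) ->
  in_Gneg k1 ->
  lser_eq (lmul k1 k1inv) (lmono 1%:M 0) ->
  lser_eq (lmul k1inv k1) (lmono 1%:M 0) ->
  in_Gnonneg k2 ->
  user_eq (umul k2 k2inv) (umono 1%:M 0) ->
  user_eq (umul k2inv k2) (umono 1%:M 0) ->
  let psi := lmul k1 (ldelta R l) in
  let phi := umul k2 (udelta R l) in
  (forall (m : int) a, 0 <= m -> forall i : int, i < 0 -> pcoef (M m a) i = 0) ->
  (forall (m : int) b, m < 0 -> forall i : int, 0 <= i -> pcoef (N m b) i = 0) ->
  (forall (m : int) a, 0 <= m ->
     lser_eq (ladd (lder (D m a) psi) (lmul psi (lmono (liftmx R (E a)) m)))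
             (lmul (laur_l (M m a)) psi)) ->
  (forall (m : int) a, 0 <= m ->
     user_eq (uadd (uder (D m a) phi) (umul phi (umono (liftmx R (E a)) m)))
             (umul (laur_u (M m a)) phi)) ->
  (forall (m : int) b, m < 0 ->
     lser_eq (ladd (lder (D m b) psi) (lmul psi (lmono (liftmx R (E b)) m)))
             (lmul (laur_l (N m b)) psi)) ->
  (forall (m : int) b, m < 0 ->
     user_eq (uadd (uder (D m b) phi) (umul phi (umono (liftmx R (E b)) m)))
             (umul (laur_u (N m b)) phi)) ->
  let U := fun a => lmul (lmul k1 (lmono (liftmx R (E a)) 0)) k1inv in
  let W := fun b => umul (umul k2 (umono (liftmx R (E b)) (-1))) k2inv in
  [/\ forall (m : int) a, 0 <= m ->
        laur_eq (M m a) (piGe0 (lmul (U a) (lmono 1%:M m))),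
      forall (m : int) b, m < 0 ->
        laur_eq (N m b) (piLt0 (umul (W b) (umono 1%:M (m + 1)))) &
      combined_solution D U W].
Proof.
(* The derivations need not commute for this direction. *)
move=> hD _ hT hdelta hk1 hk1r hk1l hk2 hk2r hk2l psi phi
  hMpoly hNpoly hpsiM hphiM hpsiN hphiN U W.
have hEE a b : liftmx R (E a) *m liftmx R (E b) = liftmx R (E b) *m liftmx R (E a).
  by case: hT => _ hcomm _ _ _; rewrite -!liftmxM hcomm.
have hdE a := lmono_commute (hdelta a).
have hM m a (hm : 0 <= m) : laur_eq (M m a) (piGe0 (lmul (U a) (lmono 1%:M m))).
  exact: (Gneg_wave_piGe0 (hD m a) (hdE a) hk1 hk1r (hMpoly m a hm) (hpsiM m a hm)).
have hN m b (hm : m < 0) : laur_eq (N m b) (piLt0 (umul (W b) (umono 1%:M (m + 1)))).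
  exact: (Gnonneg_wave_piLt0 (hD m b) (hdE b) hk2 hk2r (hNpoly m b hm) (hphiN m b hm)).
split=> //; split=> m x y hm.
- rewrite -(hM m x hm); exact: (dressing_lax (hD m x) hk1r hk1l (ldeltaE _ l) (hdE x)
    (hpsiM m x hm) 0 (hEE x y) (deriv_liftmx (hD m x) _)).
- rewrite -(hM m x hm); exact: (user_wave_lax (hD m x) (hdE x) (-1) hk2r hk2l (hEE x y)
    (deriv_liftmx (hD m x) _) (hphiM m x hm)).
- rewrite -(hN m x hm); exact: (user_wave_lax (hD m x) (hdE x) (-1) hk2r hk2l (hEE x y)
    (deriv_liftmx (hD m x) _) (hphiN m x hm)).
- rewrite -(hN m x hm); exact: (dressing_lax (hD m x) hk1r hk1l (ldeltaE _ l) (hdE x)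
    (hpsiN m x hm) 0 (hEE x y) (deriv_liftmx (hD m x) _)).
Qed.
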